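(* Let $B$ be any group and $p\ge 2$ an integer. If $w\in(B\wr C_p)'$, then $w$ can be written in wreath-recursion form as $$w=\Big(r_1,r_2,\dots,r_{p-1},\ r_1^{-1}\cdots r_{p-1}^{-1}\prod_{j=1}^{k}[f_j,g_j]\Big),$$ where $r_1,\dots,r_{p-1},f_j,g_j\in B$ and $k\le cw(B)$.
   Context: $B\wr C_p=B^p\rtimes C_p$ with $C_p$ acting on $\{1,\dots,p\}$ by cyclic shifts; elements are written $(g_1,\dots,g_p)\pi$ with multiplication $(g_1,\dots,g_p)\pi\cdot(h_1,\dots,h_p)\tau=(g_1h_{\pi(1)},\dots,g_ph_{\pi(p)})\pi\tau$. $[a,b]=aba^{-1}b^{-1}$. The commutator width $cw(G)$ of a group $G$ is the least $n$ such that every element of $G'$ is a product of at most $n$ commutators ($\infty$ if no such $n$ exists). *)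

From mathcomp Require Import all_boot.
Set Implicit Arguments. Unset Strict Implicit. Unset Printing Implicit Defensive.

Record group := Group {
  gcar :> Type;
  gmul : gcar -> gcar -> gcar;
  gone : gcar;
  ginv : gcar -> gcar;
  gmulA : forall x y z, gmul x (gmul y z) = gmul (gmul x y) z;
  gmul1 : forall x, gmul gone x = x;
  gmulV : forall x, gmul (ginv x) x = gone
}.

Definition commT (T : Type) (mul : T -> T -> T) (inv : T -> T) (a b : T) : T :=
  mul (mul (mul a b) (inv a)) (inv b).

Inductive in_derived (T : Type) (mul : T -> T -> T) (inv : T -> T) : T -> Prop :=
  | der_comm a b : in_derived mul inv (commT mul inv a b)
  | der_mul x y : in_derived mul inv x -> in_derived mul inv y ->
                  in_derived mul inv (mul x y)
  | der_inv x : in_derived mul inv x -> in_derived mul inv (inv x).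

Section GroupDefs.
Variable B : group.

Definition comm (a b : B) : B := commT (@gmul B) (@ginv B) a b.

Definition gprod (s : seq B) : B := foldr (@gmul B) (gone B) s.

Definition prod_le_comms (n : nat) (x : B) : Prop :=
  exists s : seq (B * B), size s <= n /\ x = gprod [seq comm u.1 u.2 | u <- s].

Definition cw_bound (n : nat) : Prop :=
  forall x : B, in_derived (@gmul B) (@ginv B) x -> prod_le_comms n x.

(* is_cw c : the commutator width of B equals c (None = infinity). *)
Definition is_cw (c : option nat) : Prop :=
  match c with
  | Some n => cw_bound n /\ (forall m, cw_bound m -> n <= m)
  | None => forall n, ~ cw_bound n
  end.
End GroupDefs.

Definition le_ext (k : nat) (c : option nat) : Prop :=
  match c with Some n => k <= n | None => True end.

(* The wreath product B wr C_p: elements (g_1,...,g_p) pi, pi a cyclic shift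
   i |-> i + k (mod p), represented by k : 'I_p. Indices 0..p-1. *)
Record wr (B : group) (p : nat) := Wr { wbase : 'I_p -> B; wtop : 'I_p }.

Lemma ord_pos p (i : 'I_p) : 0 < p.
Proof. exact: leq_ltn_trans (leq0n i) (ltn_ord i). Qed.

Definition shift p (k i : 'I_p) : 'I_p := Ordinal (ltn_pmod (i + k) (ord_pos i)).
Definition shiftinv p (k : 'I_p) : 'I_p := Ordinal (ltn_pmod (p - k) (ord_pos k)).

Section Wreath.
Variables (B : group) (p : nat).

(* (g,pi)(h,tau) = (i |-> g_i h_{pi(i)}, pi tau) *)
Definition wmul (x y : wr B p) : wr B p :=
  Wr (fun i => gmul (wbase x i) (wbase y (shift (wtop x) i)))
     (shift (wtop x) (wtop y)).

Definition winv (x : wr B p) : wr B p :=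
  Wr (fun i => ginv (wbase x (shift (shiftinv (wtop x)) i))) (shiftinv (wtop x)).
End Wreath.

From mathcomp Require Import all_boot.
From Stdlib Require Import Classical.
From mathcomp Require Import zify.
Set Implicit Arguments. Unset Strict Implicit.

(* Modulo B' the product of the coordinates (g_1, ..., g_p) of an element of
   B wr C_p is multiplicative, since in B/B' products may be reordered at will
   and the cyclic shift only permutes the coordinates of the second factor.
   Hence an element w of (B wr C_p)' has trivial top part and coordinate
   product in B'.  Choosing r_i := w_i for i < p, the element
   (r_1^-1 ... r_(p-1)^-1)^-1 w_p is congruent to w_1 ... w_p modulo B', so it
   lies in B' and is a product of at most cw(B) commutators. *)

Local Notation "x ⋅ y" := (gmul x y) (at level 40, left associativity).
Local Notation "x ^-1" := (ginv x).

Section GroupLemmas.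
Variable B : group.
Implicit Types x y a b c d : B.

Lemma mulgV x : x ⋅ x^-1 = gone B.
Proof.
by rewrite -[x ⋅ _]gmul1 -(gmulV x^-1) -gmulA (gmulA x^-1) gmulV gmul1 gmulV.
Qed.

Lemma mulg1 x : x ⋅ gone B = x.
Proof. by rewrite -(gmulV x) gmulA mulgV gmul1. Qed.

Lemma invg_unique x y : x ⋅ y = gone B -> x^-1 = y.
Proof. by move=> xy1; rewrite -[x^-1]mulg1 -xy1 gmulA gmulV gmul1. Qed.

Lemma invgK x : (x^-1)^-1 = x.
Proof. by apply: invg_unique; rewrite gmulV. Qed.

Lemma invg1 : (gone B)^-1 = gone B.
Proof. by apply: invg_unique; rewrite gmul1. Qed.

Lemma invMg x y : (x ⋅ y)^-1 = y^-1 ⋅ x^-1.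
Proof. by apply: invg_unique; rewrite -gmulA (gmulA y) mulgV gmul1 mulgV. Qed.

Lemma mulKg x y : x^-1 ⋅ (x ⋅ y) = y.
Proof. by rewrite gmulA gmulV gmul1. Qed.

Lemma mulKVg x y : x ⋅ (x^-1 ⋅ y) = y.
Proof. by rewrite gmulA mulgV gmul1. Qed.

Lemma invg_comm a b : (comm a b)^-1 = comm b a.
Proof. by rewrite /comm /commT !invMg !invgK !gmulA. Qed.

Lemma gprod_cat (s t : seq B) : gprod (s ++ t) = gprod s ⋅ gprod t.
Proof. by elim: s => [|x s IHs] /=; rewrite ?gmul1 // IHs gmulA. Qed.

Lemma gprod_rcons (s : seq B) x : gprod (rcons s x) = gprod s ⋅ x.
Proof. by rewrite -cats1 gprod_cat /= mulg1. Qed.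

End GroupLemmas.

Ltac gsimpl := repeat progress rewrite ?(invMg, invgK, invg1) -?gmulA
                 ?(mulKg, mulKVg, gmulV, mulgV, gmul1, mulg1).

Definition derived (B : group) (x : B) := in_derived (@gmul B) (@ginv B) x.

Definition eq_mod_derived (B : group) (a b : B) := derived (a ⋅ b^-1).

Local Notation "a ≡ b" := (eq_mod_derived a b) (at level 70).

Section Derived.
Variable B : group.
Implicit Types x y a b c d : B.

Lemma derived1 : derived (gone B).
Proof. by have := der_comm (@gmul B) (@ginv B) (gone B) (gone B); rewrite /commT; gsimpl. Qed.

Lemma derivedJ c d : derived d -> derived (c ⋅ d ⋅ c^-1).
Proof.
by move=> Dd; have := der_mul (der_comm (@gmul B) (@ginv B) c d) Dd; rewrite /commT; gsimpl.
Qed.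

Lemma eqmd1 a : (a ≡ gone B) <-> derived a.
Proof. by rewrite /eq_mod_derived invg1 mulg1. Qed.

Lemma eqmd_refl a : a ≡ a.
Proof. by rewrite /eq_mod_derived mulgV; apply: derived1. Qed.

Lemma eqmd_sym a b : a ≡ b -> b ≡ a.
Proof. by move=> ab; have := der_inv ab; rewrite /eq_mod_derived; gsimpl. Qed.

Lemma eqmd_trans a b c : a ≡ b -> b ≡ c -> a ≡ c.
Proof. by move=> ab bc; have := der_mul ab bc; rewrite /eq_mod_derived; gsimpl. Qed.

Lemma eqmdMl a b c : a ≡ b -> c ⋅ a ≡ c ⋅ b.
Proof. by move=> ab; have := derivedJ c ab; rewrite /eq_mod_derived; gsimpl. Qed.

Lemma eqmdMr a b c : a ≡ b -> a ⋅ c ≡ b ⋅ c.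
Proof. by rewrite /eq_mod_derived; gsimpl. Qed.

Lemma eqmdM a b c d : a ≡ b -> c ≡ d -> a ⋅ c ≡ b ⋅ d.
Proof. by move=> ab cd; apply: eqmd_trans (eqmdMl a cd) (eqmdMr d ab). Qed.

Lemma eqmdC a b : a ⋅ b ≡ b ⋅ a.
Proof.
by have := der_comm (@gmul B) (@ginv B) a b; rewrite /eq_mod_derived /commT; gsimpl.
Qed.

Lemma eqmdV a b : a ≡ b -> a^-1 ≡ b^-1.
Proof.
by move=> ab; have := derivedJ a^-1 (eqmd_sym ab); rewrite /eq_mod_derived; gsimpl.
Qed.

Lemma gprod_map_mul (T : Type) (f g : T -> B) (s : seq T) :
  gprod [seq f i ⋅ g i | i <- s] ≡ gprod (map f s) ⋅ gprod (map g s).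
Proof.
elim: s => [|i s IHs] /=; first by rewrite gmul1; apply: eqmd_refl.
apply: eqmd_trans (eqmdMl _ IHs) _; rewrite -!gmulA; apply: eqmdMl.
by rewrite !gmulA; apply/eqmdMr/eqmdC.
Qed.

Lemma gprod_map_inv (T : Type) (f : T -> B) (s : seq T) :
  gprod [seq (f i)^-1 | i <- s] ≡ (gprod (map f s))^-1.
Proof.
elim: s => [|i s IHs] /=; first by rewrite invg1; apply: eqmd_refl.
by apply: eqmd_trans (eqmdMl _ IHs) _; rewrite invMg; apply: eqmdC.
Qed.

Lemma gprod_perm (T : eqType) (f : T -> B) (s t : seq T) :
  perm_eq s t -> gprod (map f s) ≡ gprod (map f t).
Proof.
move=> st; apply: (catCA_perm_ind (P := fun u => gprod (map f s) ≡ gprod (map f u))) st _;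
  last exact: eqmd_refl.
move=> s1 s2 s3 /eqmd_trans; apply.
by rewrite !map_cat !gprod_cat !gmulA; apply/eqmdMr/eqmdC.
Qed.

Lemma derived_gprod_invs_mul (s : seq B) x :
  derived (gprod (rcons s x)) -> derived ((gprod [seq y^-1 | y <- s])^-1 ⋅ x).
Proof.
rewrite gprod_rcons => /eqmd1 Dsx; apply/eqmd1/(eqmd_trans _ Dsx)/eqmdMr.
by have := eqmdV (gprod_map_inv id s); rewrite map_id invgK.
Qed.

Lemma derived_gprod_comms x : derived x ->
  exists s : seq (B * B), x = gprod [seq comm u.1 u.2 | u <- s].
Proof.
elim=> [a b | y z _ [s ->] _ [t ->] | y _ [s ->]].
- by exists [:: (a, b)]; rewrite /= mulg1.
- by exists (s ++ t); rewrite map_cat gprod_cat.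
exists (rev [seq (u.2, u.1) | u <- s]).
elim: s => [|u s IHs] /=; first by rewrite invg1.
by rewrite rev_cons map_rcons gprod_rcons invMg IHs invg_comm.
Qed.

End Derived.

Lemma ex_least_nat (P : nat -> Prop) n :
  P n -> exists m, P m /\ forall k, P k -> m <= k.
Proof.
elim/ltn_ind: n => n IHn Pn.
have [[m [ltmn Pm]] | noPlt] := classic (exists m, m < n /\ P m); first exact: IHn Pm.
exists n; split=> // k Pk; rewrite leqNgt; apply/negP => ltkn.
by apply: noPlt; exists k.
Qed.

Lemma is_cw_exists (B : group) : exists c, is_cw B c.
Proof.
have [[n Bn] | noB] := classic (exists n, cw_bound B n).
  by have [m [Bm minm]] := ex_least_nat Bn; exists (Some m).
by exists None => n Bn; apply: noB; exists n.
Qed.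

Lemma derived_gprod_comms_le_cw (B : group) (c : option nat) (x : B) :
  is_cw B c -> derived x ->
  exists s : seq (B * B), le_ext (size s) c /\ x = gprod [seq comm u.1 u.2 | u <- s].
Proof.
case: c => [n [Bn _] | _] Dx; first by have [s [? ?]] := Bn x Dx; exists s.
by have [s ->] := derived_gprod_comms Dx; exists s.
Qed.

Section Wreath.
Variables (B : group) (p : nat).
Implicit Types x y : wr B p.

Lemma shift_inj (k : 'I_p) : injective (shift k).
Proof.
move=> i j /(congr1 val) /= /eqP.
by rewrite eqn_modDr !modn_small // => /eqP /val_inj.
Qed.

Lemma perm_map_shift (k : 'I_p) : perm_eq (map (shift k) (enum 'I_p)) (enum 'I_p).
Proof.
apply: uniq_perm; [by rewrite map_inj_uniq ?enum_uniq //; apply: shift_inj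
                  | exact: enum_uniq | ].
by move=> i; rewrite mem_enum -codomE (injF_onto (@shift_inj k)).
Qed.

Definition wprod x : B := gprod [seq wbase x i | i <- enum 'I_p].

Lemma wprod_shift (f : 'I_p -> B) (k : 'I_p) :
  gprod [seq f (shift k i) | i <- enum 'I_p] ≡ gprod [seq f i | i <- enum 'I_p].
Proof. by rewrite (map_comp f); apply/gprod_perm/perm_map_shift. Qed.

Lemma wprodM x y : wprod (wmul x y) ≡ wprod x ⋅ wprod y.
Proof.
by apply: eqmd_trans (gprod_map_mul _ _ _) _; apply/eqmdMl/wprod_shift.
Qed.

Lemma wprodV x : wprod (winv x) ≡ (wprod x)^-1.
Proof.
by apply: eqmd_trans (gprod_map_inv _ _) _; apply/eqmdV/wprod_shift.
Qed.

Lemma wprod_commT x y :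
  wprod (commT (@wmul B p) (@winv B p) x y) ≡ comm (wprod x) (wprod y).
Proof.
apply: eqmd_trans (wprodM _ _) _; apply: eqmdM (wprodV _).
apply: eqmd_trans (wprodM _ _) _; apply: eqmdM (wprodV _).
exact: wprodM.
Qed.

Lemma wprod_derived x : in_derived (@wmul B p) (@winv B p) x -> derived (wprod x).
Proof.
elim=> [a b | y z _ Dy _ Dz | y _ Dy]; apply/eqmd1.
- by apply: eqmd_trans (wprod_commT a b) _; apply/eqmd1/der_comm.
- by apply: eqmd_trans (wprodM y z) _; rewrite -[gone B]gmul1; apply: eqmdM; apply/eqmd1.
by apply: eqmd_trans (wprodV y) _; rewrite -invg1; apply/eqmdV/eqmd1.
Qed.

Lemma wtop_derived x : in_derived (@wmul B p) (@winv B p) x -> wtop x = 0 :> nat.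
Proof.
elim=> [a b | y z _ Dy _ Dz | y _ Dy] /=; last by rewrite Dy subn0 modnn.
  have ltap := ltn_ord (wtop a); have ltbp := ltn_ord (wtop b).
  rewrite !(modnDml, modnDmr) addnA modnDmr addnAC modnDmr.
  by rewrite (_ : _ + _ = 2 * p) ?modnMl //; lia.
by rewrite Dy Dz mod0n.
Qed.

End Wreath.

Lemma wprod_rcons (B : group) (n : nat) (x : wr B n.+1) :
  wprod x = gprod (rcons [seq wbase x (inord j) | j <- iota 0 n] (wbase x ord_max)).
Proof.
rewrite /wprod enum_ordSr map_rcons -val_enum_ord -!map_comp; congr (gprod (rcons _ _)).
by apply: eq_map => i /=; rewrite -[widen_ord _ i]inord_val.
Qed.

Theorem lemma2 (B : group) (p : nat) (hp : 2 <= p) (w : wr B p) :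
  in_derived (@wmul B p) (@winv B p) w ->
  exists (r : nat -> B) (k : nat) (f g : nat -> B),
    (exists c : option nat, is_cw B c /\ le_ext k c) /\
    nat_of_ord (wtop w) = 0 /\
    (forall i : 'I_p, i < p.-1 -> wbase w i = r i) /\
    (forall i : 'I_p, nat_of_ord i = p.-1 ->
       wbase w i = gmul (gprod [seq ginv (r j) | j <- iota 0 p.-1])
                        (gprod [seq comm (f j) (g j) | j <- iota 0 k])).
Proof.
move=> Dw; have top0 := wtop_derived Dw; have Dprod := wprod_derived Dw.
case: p hp w Dw top0 Dprod => [|[|n]] // _ w _ top0.
pose r j := wbase w (inord j).
rewrite wprod_rcons => /derived_gprod_invs_mul; rewrite -map_comp => Dlast.
have [c cwBc] := is_cw_exists B.
have [s [le_s_c last_eq]] := derived_gprod_comms_le_cw cwBc Dlast.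
pose f j := (nth (gone B, gone B) s j).1; pose g j := (nth (gone B, gone B) s j).2.
exists r, (size s), f, g; split; first by exists c.
split=> //; split=> [i _ | i i_max]; first by rewrite /r inord_val.
have -> : i = ord_max by apply: val_inj.
have -> : [seq comm (f j) (g j) | j <- iota 0 (size s)] = [seq comm u.1 u.2 | u <- s].
  by rewrite (map_comp (fun u => comm u.1 u.2)) map_nth_iota0 ?take_size.
by rewrite -last_eq mulKVg.
Qed.
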